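(* Let $G$ be a hypo-unique domination graph of order $n$. Then $1\leq \gamma(G)\leq \lfloor 2n/5\rfloor+1$. Furthermore: (i) $\gamma(G)=1$ if and only if $G=K_2$; (ii) $\gamma(G)=2$ if and only if $n\geq 4$ is even and $G$ is the complete graph $K_n$ minus a perfect matching; (iii) $\gamma(G)=\lfloor 2n/5\rfloor+1$ if and only if $G\in\{K_2,C_4,C_7\}$.
   Context: All graphs are finite, simple and undirected. A set $D\subseteq V(G)$ is dominating if every vertex of $G$ not in $D$ has a neighbor in $D$; $\gamma(G)$ is the minimum size of a dominating set, and a dominating set of size $\gamma(G)$ is a $\gamma$-set. $G$ is a hypo-unique domination graph if $G$ has at least two $\gamma$-sets but for every $v\in V(G)$ the graph $G-v$ has exactly one $\gamma$-set. $C_m$ denotes the cycle on $m$ vertices. *)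

(* A simple graph is a finType T with a symmetric,
   irreflexive boolean adjacency relation e. *)
From mathcomp Require Import all_boot.
Set Implicit Arguments. Unset Strict Implicit. Unset Printing Implicit Defensive.

Section Dom.
Variables (T : finType) (e : rel T).

Definition dominating (S D : {set T}) : bool :=
  (D \subset S) &&
  [forall x in S, (x \in D) || [exists y in D, e x y]].

(* domination number of G[S]: the minimum size of a dominating set
   (S itself is always dominating, so the arg min is well defined). *)
Definition gamma (S : {set T}) : nat :=
  #|[arg min_(D < S | dominating S D) #|D|]|.

Definition gamma_set (S D : {set T}) : bool :=
  dominating S D && (#|D| == gamma S).

Definition hypo_unique : Prop :=
  1 < #|[set D | gamma_set setT D]| /\
  forall v : T, #|[set D | gamma_set (setT :\ v) D]| = 1.
End Dom.

Definition isomorphic (T : finType) (e : rel T) (m : nat) (e' : rel 'I_m) : Prop :=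
  exists f : T -> 'I_m, bijective f /\ forall x y, e x y = e' (f x) (f y).

Definition complete_rel (m : nat) : rel 'I_m := fun x y => x != y.

Definition cycle_rel (m : nat) : rel 'I_m :=
  fun x y => (y == x.+1 %% m :> nat) || (x == y.+1 %% m :> nat).

(* K_m minus the perfect matching {2k, 2k+1} (m even) *)
Definition cocktail_rel (m : nat) : rel 'I_m :=
  fun x y => (x != y) && (x./2 != y./2).
Arguments isomorphic {T} e m e'.
Arguments complete_rel m : clear implicits.
Arguments cycle_rel m : clear implicits.
Arguments cocktail_rel m : clear implicits.

(* Call w critical if gamma(G - w) < gamma(G).  Without critical vertices,
   every vertex lies in one of two distinct gamma-sets D1, D2 (otherwise both
   would be gamma-sets of G - w), and counting the private neighbours of D2 in
   G - v, for v in D1 \ D2, leaves room for at most two vertices.  For a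
   critical w, the unique gamma-set D of G - w has gamma(G) - 1 elements, and
   uniqueness gives every vertex of D two private neighbours outside D, so
   3 (gamma(G) - 1) <= n - 1: this is the bound, tight only for n = 4 and 7.
   If gamma(G) = 2, every x has a mate, a vertex dominating G - x on its own;
   inverting x |-> mate gives a fixed-point-free involution whose pairs are the
   non-edges, i.e. G is K_n minus a perfect matching.  If n = 7 and
   gamma(G) = 3, a critical vertex w, the gamma-set of G - w and its private
   neighbours fix 10 of the 21 adjacencies, and a computation shows that each
   of the 2^11 completions either visibly violates the hypotheses or is C_7. *)

From mathcomp Require Import all_boot zify.
Set Implicit Arguments. Unset Strict Implicit. Unset Printing Implicit Defensive.

Section Domination.
Variables (T : finType) (e : rel T).
Implicit Types (S D : {set T}) (w x y : T).

Lemma dominatingP S D :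
  reflect (D \subset S /\ forall x, x \in S -> x \in D \/ exists2 y, y \in D & e x y)
          (dominating e S D).
Proof.
apply: (iffP andP) => [[sDS /forall_inP H]|[sDS H]]; split => //.
  by move=> x /H /orP [->|/exists_inP [y yD exy]]; [left | right; exists y].
apply/forall_inP => x /H [->//|[y yD exy]].
by apply/orP; right; apply/exists_inP; exists y.
Qed.

Lemma dominating_subset S D : dominating e S D -> D \subset S.
Proof. by case/andP. Qed.

Lemma dominating_refl S : dominating e S S.
Proof. by apply/dominatingP; split=> // x ->; left. Qed.

Lemma dominating_set0 S : dominating e S set0 -> S = set0.
Proof.
move=> /dominatingP [_ H]; apply/setP => x; rewrite inE.
by apply/negP => /H [|[y]]; rewrite inE.
Qed.

Lemma gamma_exists S : exists2 D, dominating e S D & #|D| = gamma e S.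
Proof.
by rewrite /gamma; case: arg_minnP; [exact: dominating_refl | move=> D HD _; exists D].
Qed.

Lemma gamma_leq_card S D : dominating e S D -> gamma e S <= #|D|.
Proof.
by rewrite /gamma; case: arg_minnP; [exact: dominating_refl | move=> D0 _ H /H].
Qed.

Lemma gamma_eq0 S : gamma e S = 0 -> S = set0.
Proof.
have [D HD <-] := gamma_exists S; move/eqP; rewrite cards_eq0 => /eqP D0.
by apply: dominating_set0; rewrite -D0.
Qed.

Lemma gamma_set_dominating S D : gamma_set e S D -> dominating e S D.
Proof. by case/andP. Qed.

Lemma gamma_set_card S D : gamma_set e S D -> #|D| = gamma e S.
Proof. by case/andP => _ /eqP. Qed.

Lemma dominating_gamma_set S D :
  dominating e S D -> #|D| <= gamma e S -> gamma_set e S D.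
Proof. by move=> HD HS; rewrite /gamma_set HD eqn_leq HS gamma_leq_card. Qed.

Lemma dominating_setD1 S D w :
  w \notin D -> dominating e S D -> dominating e (S :\ w) D.
Proof.
move=> wD /dominatingP [sDS H]; apply/dominatingP; split=> [|x /setD1P [_ /H] //].
apply/subsetP => x xD; rewrite !inE (subsetP sDS) // andbT.
by apply: contraNneq wD => <-.
Qed.

Lemma dominating_setU1 S D w :
  w \in S -> dominating e (S :\ w) D -> dominating e S (w |: D).
Proof.
move=> wS /dominatingP [sDS H]; apply/dominatingP; split.
  by rewrite subUset sub1set wS (subset_trans sDS) ?subsetDl.
move=> x xS; have [->|xw] := eqVneq x w; first by left; rewrite setU11.
have /H [xD|[y yD exy]] : x \in S :\ w by rewrite !inE xw.
  by left; rewrite setU1r.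
by right; exists y; rewrite ?setU1r.
Qed.

Lemma gamma_leq_setD1 S w : w \in S -> gamma e S <= (gamma e (S :\ w)).+1.
Proof.
move=> wS; have [D HD <-] := gamma_exists (S :\ w).
apply: leq_trans (gamma_leq_card (dominating_setU1 wS HD)) _.
by rewrite cardsU1; case: (w \in D).
Qed.

End Domination.

Section PrivateNeighbours.
Variables (T : finType) (e : rel T) (S D : {set T}).
Hypotheses (e_sym : symmetric e) (e_irr : irreflexive e).
Hypotheses (gD : gamma_set e S D) (uD : forall D', gamma_set e S D' -> D' = D).

Definition private_nbr (x p : T) :=
  [&& p \in S, p \notin D, e x p & [forall z in D, e z p ==> (z == x)]].

Lemma private_nbr_uniq x x' p :
  private_nbr x p -> private_nbr x' p -> x' \in D -> x = x'.
Proof.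
case/and4P => _ _ _ /forall_inP H /and4P [_ _ ex' _] x'D.
by apply/esym/eqP; move: (H x' x'D); rewrite ex'.
Qed.

Lemma private_nbr_nadj x x' p : private_nbr x p -> x' \in D -> x' != x -> ~~ e x' p.
Proof.
case/and4P => _ _ _ /forall_inP H x'D; apply: contraNN => ex'p.
exact: (implyP (H x' x'D)).
Qed.

Lemma dominating_exchange x y : x \in D -> y \in S -> e x y ->
  [set p | private_nbr x p] \subset [set y] -> dominating e S (y |: (D :\ x)).
Proof.
move=> xD yS exy sub; have /dominatingP [sDS H] := gamma_set_dominating gD.
apply/dominatingP; split.
  by rewrite subUset sub1set yS (subset_trans (subsetDl _ _) sDS).
move=> s sS; have [->|sy] := eqVneq s y; first by left; rewrite setU11.
have [->|sx] := eqVneq s x; first by right; exists y; rewrite ?setU11.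
have [sD|sD] := boolP (s \in D); first by left; rewrite setU1r // !inE sx.
right; have [z zD esz] : exists2 z, z \in D & e s z.
  by case: (H s sS); rewrite ?(negbTE sD).
have [/exists_inP [z0 z0D esz0]|/exists_inPn noz] := boolP [exists z0 in D :\ x, e s z0].
  by exists z0; rewrite ?setU1r.
have onlyx z1 : z1 \in D -> e s z1 -> z1 = x.
  move=> z1D esz1; apply/eqP/negPn/negP => z1x.
  by move: (noz z1); rewrite !inE z1x z1D esz1 => /(_ isT).
have zx := onlyx z zD esz.
suff: s \in [set y] by rewrite inE (negbTE sy).
apply: (subsetP sub); rewrite inE /private_nbr sS sD e_sym -zx esz /=.
apply/forall_inP => z1 z1D; apply/implyP => ez1.
by rewrite zx (onlyx z1 z1D) // e_sym.
Qed.

(* Otherwise exchanging x for its unique private neighbour (or for y) would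
   give a second gamma-set. *)
Lemma private_nbr_card_gt1 x y :
  x \in D -> y \in S -> e x y -> 1 < #|[set p | private_nbr x p]|.
Proof.
move=> xD yS exy; rewrite ltnNge; apply/negP => le1.
have [y' [y'S exy' sub]] : exists y', [/\ y' \in S, e x y' &
    [set p | private_nbr x p] \subset [set y']].
  have [->|[p pP]] := set_0Vmem [set p | private_nbr x p].
    by exists y; rewrite sub0set.
  rewrite inE in pP; have /and4P [pS _ exp _] := pP.
  exists p; split=> //; apply/subsetP => q qP; rewrite inE.
  by move/card_le1_eqP: le1 => /(_ q p qP); rewrite inE => ->.
have xy' : x != y' by apply: contraTneq exy' => ->; rewrite e_irr.
have cD' : #|y' |: (D :\ x)| <= gamma e S.
  by rewrite -(gamma_set_card gD) cardsU1 (cardsD1 x D) xD; case: (_ \notin _).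
have := uD (dominating_gamma_set (dominating_exchange xD y'S exy' sub) cD').
by move/setP/(_ x); rewrite !inE eqxx xD (negbTE xy').
Qed.

Lemma private_nbr_count :
  2 * #|[set x in D | [exists y in S, e x y]]| <= #|S :\: D|.
Proof.
set X := [set x in D | _].
pose p1 x := odflt x [pick p | private_nbr x p].
pose p2 x := odflt x [pick p | private_nbr x p && (p != p1 x)].
have hp x : x \in X ->
    [/\ x \in D, private_nbr x (p1 x), private_nbr x (p2 x) & p2 x != p1 x].
  rewrite inE => /andP [xD /exists_inP [y yS exy]].
  have /card_gt1P [q1 [q2 [q1P q2P q12]]] := private_nbr_card_gt1 xD yS exy.
  rewrite inE in q1P; rewrite inE in q2P.
  have pp1 : private_nbr x (p1 x).
    by rewrite /p1; case: pickP => [//|none]; move: (none q1); rewrite q1P.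
  have [q qP qn] : exists2 q, private_nbr x q & q != p1 x.
    have [q1e|] := eqVneq q1 (p1 x); last by exists q1.
    by exists q2 => //; rewrite -q1e eq_sym.
  have /andP [pp2 n12] : private_nbr x (p2 x) && (p2 x != p1 x).
    by rewrite /p2; case: pickP => [//|none]; move: (none q); rewrite qP qn.
  by split.
have inj1 : {in X &, injective p1}.
  move=> x x' /hp [_ h _ _] /hp [x'D h' _ _] eq.
  by apply: (private_nbr_uniq h _ x'D); rewrite eq.
have inj2 : {in X &, injective p2}.
  move=> x x' /hp [_ _ h _] /hp [x'D _ h' _] eq.
  by apply: (private_nbr_uniq h _ x'D); rewrite eq.
have disj : [disjoint p1 @: X & p2 @: X].
  apply/pred0P => q /=; apply/negP => /andP [/imsetP [x xX ->] /imsetP [x' x'X eq]].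
  have [_ h1 _ n12] := hp x xX; have [x'D _ h2' _] := hp x' x'X.
  have xx' : x = x' by apply: (private_nbr_uniq h1 _ x'D); rewrite eq.
  by move: n12; rewrite xx' -eq xx' eqxx.
have sub : p1 @: X :|: p2 @: X \subset S :\: D.
  apply/subsetP => q /setUP [] /imsetP [x /hp [_ h1 h2 _] ->]; rewrite inE.
    by case/and4P: h1 => -> -> _ _.
  by case/and4P: h2 => -> -> _ _.
have := subset_leq_card sub; rewrite cardsU.
rewrite (card_in_imset inj1) (card_in_imset inj2).
by move: disj; rewrite -setI_eq0 => /eqP ->; rewrite cards0 subn0 mul2n addnn.
Qed.

End PrivateNeighbours.

Section HypoUnique.
Variables (T : finType) (e : rel T).
Hypotheses (e_sym : symmetric e) (e_irr : irreflexive e) (hyp : hypo_unique e).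
Implicit Types (D : {set T}) (w x y : T).

Lemma gamma_setD1_uniq w D1 D2 :
  gamma_set e (setT :\ w) D1 -> gamma_set e (setT :\ w) D2 -> D1 = D2.
Proof.
move=> g1 g2; case: hyp => _ /(_ w) /eqP /cards1P [D0 HD0].
have: D1 \in [set D | gamma_set e (setT :\ w) D] by rewrite inE.
have: D2 \in [set D | gamma_set e (setT :\ w) D] by rewrite inE.
by rewrite HD0 !inE => /eqP -> /eqP ->.
Qed.

Lemma gamma_setD1_unique w : exists2 D, gamma_set e (setT :\ w) D &
  forall D', gamma_set e (setT :\ w) D' -> D' = D.
Proof.
have [D HD HDc] := gamma_exists e (setT :\ w).
have gD : gamma_set e (setT :\ w) D by rewrite /gamma_set HD HDc eqxx.
by exists D => // D' /gamma_setD1_uniq; apply.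
Qed.

Lemma two_gamma_sets : exists D1 D2,
  [/\ gamma_set e setT D1, gamma_set e setT D2 & D1 != D2].
Proof.
case: hyp => /card_gt1P [D1 [D2 [g1 g2 n12]]] _.
by exists D1, D2; rewrite !inE in g1 g2.
Qed.

Lemma gamma_set_setD1 w D : gamma e setT <= gamma e (setT :\ w) ->
  gamma_set e setT D -> w \notin D -> gamma_set e (setT :\ w) D.
Proof.
move=> le gD wD; apply: dominating_gamma_set.
  exact: dominating_setD1 (gamma_set_dominating gD).
by rewrite (gamma_set_card gD).
Qed.

Lemma gamma_setD1_lt w D1 D2 : gamma_set e setT D1 -> gamma_set e setT D2 ->
  D1 != D2 -> w \notin D1 -> w \notin D2 -> gamma e (setT :\ w) < gamma e setT.
Proof.
move=> g1 g2 n12 w1 w2; rewrite ltnNge; apply/negP => le.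
move/eqP: n12; apply.
exact: gamma_setD1_uniq (gamma_set_setD1 le g1 w1) (gamma_set_setD1 le g2 w2).
Qed.

Lemma small_dominating_setD1_uniq w D1 D2 :
  dominating e (setT :\ w) D1 -> dominating e (setT :\ w) D2 ->
  #|D1| < gamma e setT -> #|D2| < gamma e setT -> D1 = D2.
Proof.
have le := gamma_leq_setD1 e (in_setT w).
move=> d1 d2 c1 c2; apply: (@gamma_setD1_uniq w); apply: dominating_gamma_set => //.
  exact: (leq_trans c1 le).
exact: (leq_trans c2 le).
Qed.

Lemma small_dominating_setD1 w D1 D2 :
  dominating e setT D1 -> dominating e setT D2 -> D1 != D2 ->
  #|D1| <= gamma e setT -> #|D2| <= gamma e setT -> w \notin D1 -> w \notin D2 ->
  exists2 D, dominating e (setT :\ w) D & #|D| < gamma e setT.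
Proof.
move=> d1 d2 n12 c1 c2 w1 w2; have [D dD cD] := gamma_exists e (setT :\ w).
exists D; rewrite // cD.
exact: (gamma_setD1_lt (dominating_gamma_set d1 c1) (dominating_gamma_set d2 c2)
  n12 w1 w2).
Qed.

(* An isolated x lies in every gamma-set, and D |-> D :\ x would turn the two
   gamma-sets of G into two gamma-sets of G - x. *)
Lemma exists_nbr x : exists y, e x y.
Proof.
have [/existsP //|/existsPn iso] := boolP [exists y, e x y]; exfalso.
have [D1 [D2 [g1 g2 n12]]] := two_gamma_sets.
have inD D : gamma_set e setT D -> x \in D.
  move=> /gamma_set_dominating /dominatingP [_ /(_ x (in_setT x))].
  by case=> [//|[y _]]; rewrite (negbTE (iso y)).
have gsub D : gamma_set e setT D -> gamma_set e (setT :\ x) (D :\ x).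
  move=> gD; apply: dominating_gamma_set.
    apply/dominatingP; split; first by rewrite setSD ?subsetT.
    move=> y /setD1P [yx _].
    have /dominatingP [_ /(_ y (in_setT y))] := gamma_set_dominating gD.
    case=> [yD|[z zD eyz]]; first by left; rewrite !inE yx.
    right; exists z => //; rewrite !inE zD andbT.
    by apply: contraNneq (iso y) => zx; rewrite -zx e_sym.
  have := gamma_leq_setD1 e (in_setT x).
  by rewrite -(gamma_set_card gD) (cardsD1 x D) inD.
move/eqP: n12; apply.
have := gamma_setD1_uniq (gsub _ g1) (gsub _ g2).
by rewrite -{2}(setD1K (inD _ g1)) -{2}(setD1K (inD _ g2)) => ->.
Qed.

Lemma gamma_setD1_ltE w D : gamma e (setT :\ w) < gamma e setT ->
  gamma_set e (setT :\ w) D ->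
  [/\ (gamma e (setT :\ w)).+1 = gamma e setT, w \notin D &
      forall y, y \in D -> ~~ e w y].
Proof.
move=> lt gD; split.
- by apply/eqP; rewrite eqn_leq lt gamma_leq_setD1.
- apply/negP => /(subsetP (dominating_subset (gamma_set_dominating gD))).
  by rewrite !inE eqxx.
move=> y yD; apply/negP => ewy.
have dD : dominating e setT D.
  have /dominatingP [_ H] := gamma_set_dominating gD.
  apply/dominatingP; split=> [|x _]; first exact: subsetT.
  have [->|xw] := eqVneq x w; first by right; exists y.
  by apply: H; rewrite !inE xw.
by have := gamma_leq_card dD; rewrite (gamma_set_card gD) leqNgt lt.
Qed.

Lemma gamma_setD1_lt_bound w : gamma e (setT :\ w) < gamma e setT ->
  3 * gamma e (setT :\ w) <= #|T|.-1.
Proof.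
move=> lt; have [D gD uD] := gamma_setD1_unique w.
have [_ wD nbr] := gamma_setD1_ltE lt gD.
have := private_nbr_count e_sym e_irr gD uD.
have -> : [set x in D | [exists y in setT :\ w, e x y]] = D.
  apply/setP => x; rewrite inE andb_idr // => xD.
  have [y exy] := exists_nbr x; apply/exists_inP; exists y => //.
  by rewrite !inE andbT; apply: contraTneq exy => ->; rewrite e_sym nbr.
rewrite cardsDS ?(dominating_subset (gamma_set_dominating gD)) //.
rewrite -cardsT (cardsD1 w setT) in_setT (gamma_set_card gD) /=; lia.
Qed.

End HypoUnique.

Section NoCriticalVertex.
Variables (T : finType) (e : rel T).
Hypotheses (e_sym : symmetric e) (e_irr : irreflexive e) (hyp : hypo_unique e).
Hypothesis noncrit : forall w : T, gamma e setT <= gamma e (setT :\ w).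

Section TwoGammaSets.
Variables (D1 D2 : {set T}).
Hypotheses (g1 : gamma_set e setT D1) (g2 : gamma_set e setT D2) (n12 : D1 != D2).

Lemma noncritical_cover t : t \in D1 :|: D2.
Proof.
rewrite inE; apply/negPn/negP; rewrite negb_or => /andP [t1 t2].
move/eqP: n12; apply.
exact: (gamma_setD1_uniq hyp (gamma_set_setD1 (noncrit t) g1 t1)
                             (gamma_set_setD1 (noncrit t) g2 t2)).
Qed.

Lemma noncritical_card_setD : #|D1 :\: D2| = #|D2 :\: D1|.
Proof. by rewrite !cardsD setIC (gamma_set_card g1) (gamma_set_card g2). Qed.

Lemma noncritical_count v : v \in D1 -> v \notin D2 ->
  2 * #|[set x in D2 | [exists y in setT :\ v, e x y]]| + 1 <= #|D1 :\: D2|.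
Proof.
move=> vD1 vD2; have g2v := gamma_set_setD1 (noncrit v) g2 vD2.
have := private_nbr_count e_sym e_irr g2v (fun D' gD' => gamma_setD1_uniq hyp gD' g2v).
have sub : (setT :\ v) :\: D2 \subset (D1 :\: D2) :\ v.
  apply/subsetP => t; rewrite !inE andbT => /andP [tD2 tv]; rewrite tD2 tv /=.
  by move: (noncritical_cover t); rewrite inE (negbTE tD2) orbF.
have := subset_leq_card sub; rewrite (cardsD1 v (D1 :\: D2)) !inE vD2 vD1 /=; lia.
Qed.

Lemma noncritical_card_setD_le1 : #|D1 :\: D2| <= 1.
Proof.
rewrite leqNgt; apply/negP => /card_gt1P [v [v' [vA v'A vv']]].
move: vA v'A; rewrite !inE => /andP [vD2 vD1] /andP [v'D2 v'D1].
have hv := noncritical_count vD1 vD2; have hv' := noncritical_count v'D1 v'D2.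
set Xv := [set x in D2 | _] in hv; set Xv' := [set x in D2 | _] in hv'.
have : D2 \subset Xv :|: Xv'.
  apply/subsetP => x xD2; have [y exy] := exists_nbr e_sym hyp x.
  rewrite !inE xD2 /=; have [yv|yv] := eqVneq y v.
    by apply/orP; right; apply/exists_inP; exists y; rewrite // !inE yv vv'.
  by apply/orP; left; apply/exists_inP; exists y; rewrite // !inE yv.
move/subset_leq_card; have := leq_card_setU Xv Xv'; case=> le _ le2.
have : #|D1 :\: D2| <= #|D2|.
  rewrite (leq_trans (subset_leq_card (subsetDl D1 D2))) //.
  by rewrite (gamma_set_card g1) (gamma_set_card g2).
lia.
Qed.

Lemma noncritical_nbr v x y : v \in D1 :\: D2 -> x \in D2 -> e x y -> y = v.
Proof.
rewrite inE => /andP [vD2 vD1] xD2 exy; apply/eqP/negPn/negP => yv.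
have : 0 < #|[set x in D2 | [exists y in setT :\ v, e x y]]|.
  apply/card_gt0P; exists x; rewrite inE xD2.
  by apply/exists_inP; exists y; rewrite // !inE yv.
have := noncritical_count vD1 vD2; have := noncritical_card_setD_le1; lia.
Qed.

End TwoGammaSets.

Lemma noncritical_card_le2 : #|T| <= 2.
Proof.
have [D1 [D2 [g1 g2 n12]]] := two_gamma_sets hyp.
have [v vA] : exists v, v \in D1 :\: D2.
  apply/set0Pn; rewrite setD_eq0; move: n12; apply: contraNN => sub.
  by rewrite eqEcard sub (gamma_set_card g1) (gamma_set_card g2) /=.
have [b bB] : exists b, b \in D2 :\: D1.
  apply/card_gt0P; rewrite -(noncritical_card_setD g1 g2).
  by apply/card_gt0P; exists v.
have n21 : D2 != D1 by rewrite eq_sym.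
have onD2 t : t \in D2 -> t = b.
  move=> tD2; have [y ety] := exists_nbr e_sym hyp t.
  have yv := noncritical_nbr g1 g2 n12 vA tD2 ety.
  move: vA; rewrite inE => /andP [_ vD1].
  by apply: (noncritical_nbr g2 g1 n21 bB vD1); rewrite e_sym -yv.
have onD1 t : t \in D1 -> t = v.
  move=> tD1; have [y ety] := exists_nbr e_sym hyp t.
  have yb := noncritical_nbr g2 g1 n21 bB tD1 ety.
  move: bB; rewrite inE => /andP [_ bD2].
  by apply: (noncritical_nbr g1 g2 n12 vA bD2); rewrite e_sym -yb.
have sub : [set: T] \subset [set v; b].
  apply/subsetP => t _; rewrite !inE.
  by case/setUP: (noncritical_cover g1 g2 n12 t) => [/onD1|/onD2] ->;
    rewrite eqxx ?orbT.
by rewrite -cardsT (leq_trans (subset_leq_card sub)) // cards2; case: (v != b).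
Qed.

End NoCriticalVertex.

Lemma exists_critical_vertex (T : finType) (e : rel T) :
  symmetric e -> irreflexive e -> hypo_unique e ->
  2 < #|T| -> exists w, gamma e (setT :\ w) < gamma e setT.
Proof.
move=> e_sym e_irr hyp n3.
have [/existsP //|/existsPn nc] := boolP [exists w, gamma e (setT :\ w) < gamma e setT].
suff : #|T| <= 2 by rewrite leqNgt n3.
by apply: noncritical_card_le2 e_sym e_irr hyp _ => w; rewrite leqNgt nc.
Qed.

Section SmallGamma.
Variables (T : finType) (e : rel T).
Hypotheses (e_sym : symmetric e) (e_irr : irreflexive e) (hyp : hypo_unique e).

Lemma gamma_gt0 : 0 < gamma e setT.
Proof.
rewrite lt0n; apply/negP => /eqP /gamma_eq0 T0.
have [D1 [D2 [_ _]]] := two_gamma_sets hyp.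
suff D0 (D : {set T}) : D = set0 by rewrite (D0 D1) (D0 D2) eqxx.
by apply/setP => x; move: (in_setT x); rewrite T0 inE.
Qed.

Lemma card_gt1 : 1 < #|T|.
Proof.
have /card_gt0P [x _] : 0 < #|T|.
  by rewrite -cardsT (leq_trans gamma_gt0) ?gamma_leq_card ?dominating_refl.
have [y exy] := exists_nbr e_sym hyp x.
apply/card_gt1P; exists x, y; split=> //.
by apply: contraTneq exy => ->; rewrite e_irr.
Qed.

Lemma card2_K2 : #|T| = 2 -> gamma e setT = 1 /\ isomorphic e 2 (complete_rel 2).
Proof.
move=> n2; have /card_gt0P [x _] : 0 < #|T| by rewrite n2.
have [y exy] := exists_nbr e_sym hyp x.
have xy : x != y by apply: contraTneq exy => ->; rewrite e_irr.
have xory t : (t == x) || (t == y).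
  have sT : [set x; y] = setT.
    by apply/eqP; rewrite eqEcard subsetT cardsT cards2 xy n2.
  by move: (in_setT t); rewrite -sT !inE.
split.
  apply/eqP; rewrite eqn_leq gamma_gt0 andbT.
  rewrite -(cards1 x) gamma_leq_card //; apply/dominatingP; split=> [|t _].
    exact: subsetT.
  case/orP: (xory t) => /eqP ->; first by left; rewrite inE.
  by right; exists x; rewrite ?inE // e_sym.
pose f t : 'I_2 := if t == x then ord0 else ord_max.
have fx : f x = ord0 by rewrite /f eqxx.
have fy : f y = ord_max by rewrite /f eq_sym (negbTE xy).
exists f; split.
  apply: inj_card_bij; last by rewrite card_ord n2.
  by move=> t1 t2; case/orP: (xory t1) => /eqP ->; case/orP: (xory t2) => /eqP ->;
    rewrite ?fx ?fy.
move=> t1 t2; rewrite /complete_rel.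
by case/orP: (xory t1) => /eqP ->; case/orP: (xory t2) => /eqP ->;
  rewrite ?fx ?fy ?e_irr ?exy ?(e_sym y x) ?exy.
Qed.

Lemma gamma_eq1_card : gamma e setT = 1 -> #|T| = 2.
Proof.
move=> g1; apply/eqP; rewrite eqn_leq card_gt1 andbT leqNgt; apply/negP => n3.
have [D1 [D2 [h1 h2 n12]]] := two_gamma_sets hyp.
have /cards1P [u Du] : #|D1| == 1 by rewrite (gamma_set_card h1) g1.
have /cards1P [u' Du'] : #|D2| == 1 by rewrite (gamma_set_card h2) g1.
have /set0Pn [w] : ~: [set u; u'] != set0.
  rewrite -card_gt0; have := cardsC [set u; u']; rewrite cards2.
  by move: n3; case: (u != u'); lia.
rewrite !inE negb_or => /andP [wu wu'].
have := gamma_setD1_lt hyp h1 h2 n12 (w := w); rewrite Du Du' !inE wu wu' g1.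
move=> /(_ isT isT); rewrite ltnS leqn0 => /eqP /gamma_eq0 /setP /(_ u).
by rewrite !inE eq_sym wu.
Qed.

Lemma gamma_bound : 2 < #|T| -> 3 * (gamma e setT).-1 <= #|T|.-1.
Proof.
move=> n3; have [w lt] := exists_critical_vertex e_sym e_irr hyp n3.
have [D gD _] := gamma_setD1_unique hyp w.
have [<- _ _] := gamma_setD1_ltE lt gD; rewrite /=.
exact: (gamma_setD1_lt_bound e_sym e_irr hyp lt).
Qed.

Lemma gamma_range : 1 <= gamma e setT <= (2 * #|T|) %/ 5 + 1.
Proof.
rewrite gamma_gt0 /=; have [n3|n2] := ltnP 2 #|T|.
  have := gamma_bound n3; have := gamma_gt0; have := divn_eq (2 * #|T|) 5.
  have := ltn_pmod (2 * #|T|) (isT : 0 < 5).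
  move: ((2 * #|T|) %/ 5) ((2 * #|T|) %% 5) => q r; lia.
have n2' : #|T| = 2 by have := card_gt1; lia.
by rewrite (card2_K2 n2').1 n2'.
Qed.

End SmallGamma.

Section Transport.
Variables (T T' : finType) (e : rel T) (e' : rel T') (f : T -> T') (g : T' -> T).
Hypotheses (fK : cancel f g) (gK : cancel g f) (hf : forall x y, e x y = e' (f x) (f y)).

Lemma dominating_imset (S D : {set T}) :
  dominating e S D = dominating e' (f @: S) (f @: D).
Proof.
rewrite !(can2_imset_pre _ fK gK).
apply/idP/idP => /dominatingP [sub H]; apply/dominatingP; split.
- by apply/subsetP => y; rewrite !inE => /(subsetP sub).
- move=> y; rewrite inE => /H [gD|[z zD ez]]; first by left; rewrite inE.
  by right; exists (f z); [rewrite inE fK | rewrite -[y]gK -hf].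
- by apply/subsetP => x xD; have := subsetP sub (f x); rewrite !inE fK; apply.
- move=> x xS; have := H (f x); rewrite !inE fK => /(_ xS) [xD|[z zD ez]].
    by left.
  by right; exists (g z); [move: zD; rewrite inE | rewrite hf gK].
Qed.

Lemma imsetK (A : {set T'}) : f @: (g @: A) = A.
Proof. by rewrite -imset_comp (eq_imset _ (gK : f \o g =1 id)) imset_id. Qed.

Lemma gamma_imset (S : {set T}) : gamma e S = gamma e' (f @: S).
Proof.
have f_inj : injective f := can_inj fK.
apply/eqP; rewrite eqn_leq; apply/andP; split.
  have [D' HD' <-] := gamma_exists e' (f @: S).
  rewrite -(imsetK D') -dominating_imset in HD'.
  exact: leq_trans (gamma_leq_card HD') (leq_imset_card _ _).
have [D HD <-] := gamma_exists e S.
by rewrite dominating_imset in HD; rewrite -(card_imset _ f_inj) gamma_leq_card.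
Qed.

Lemma card_gamma_sets_imset (S : {set T}) :
  #|[set D | gamma_set e S D]| = #|[set D | gamma_set e' (f @: S) D]|.
Proof.
have f_inj : injective f := can_inj fK.
have gs_imset D : gamma_set e S D = gamma_set e' (f @: S) (f @: D).
  by rewrite /gamma_set dominating_imset gamma_imset card_imset.
rewrite -(card_imset _ (imset_inj f_inj)); apply: eq_card => D'.
rewrite [in RHS]inE; apply/imsetP/idP => [[D]|HD'].
  by rewrite inE => gD ->; rewrite -gs_imset.
by exists (g @: D'); rewrite ?imsetK // inE gs_imset imsetK.
Qed.

Lemma imset_setT : f @: setT = setT.
Proof. by rewrite (can2_imset_pre _ fK gK); apply/setP => y; rewrite !inE. Qed.

Lemma imset_setTD1 (w : T) : f @: (setT :\ w) = setT :\ f w.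
Proof.
rewrite (can2_imset_pre _ fK gK); apply/setP => y.
by rewrite !inE -{1}(fK w) (can_eq gK).
Qed.

Lemma hypo_unique_imset : hypo_unique e -> hypo_unique e'.
Proof.
case=> h1 h2; split; first by rewrite -imset_setT -card_gamma_sets_imset.
by move=> w'; rewrite -(gK w') -imset_setTD1 -card_gamma_sets_imset.
Qed.

End Transport.

Section Isomorphic.
Variables (T : finType) (e : rel T) (m : nat) (r : rel 'I_m).
Hypothesis iso : isomorphic e m r.

Lemma isomorphic_card : #|T| = m.
Proof. by case: iso => f [bf _]; rewrite (bij_eq_card bf) card_ord. Qed.

Lemma isomorphic_gamma : gamma e setT = gamma r setT.
Proof.
by case: iso => f [[g fK gK] hf]; rewrite (gamma_imset fK gK hf) (imset_setT fK gK).
Qed.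

Lemma isomorphic_hypo_unique : hypo_unique e -> hypo_unique r.
Proof. by case: iso => f [[g fK gK] hf]; apply: hypo_unique_imset fK gK hf. Qed.

Lemma isomorphic_trans k (r' : rel 'I_k) : isomorphic r k r' -> isomorphic e k r'.
Proof.
case: iso => f [bf hf] [h [bh hh]]; exists (h \o f); split; first exact: bij_comp.
by move=> x y; rewrite hf hh.
Qed.

End Isomorphic.

Section InvolutionCocktail.
Variables (T : finType) (e : rel T) (s : T -> T).
Hypotheses (sK : involutive s) (s_fix : forall t, s t != t).
Hypothesis eE : forall x y, e x y = (x != y) && (y != s x).

Let lower := [set t | enum_rank t < enum_rank (s t)].
Let rep t := if t \in lower then t else s t.
(* The pair {t, s t} whose representative has position k in [enum lower] gets
   the labels 2k and 2k + 1: the pairs become the matching of [cocktail_rel]. *)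
Let label t := (t \notin lower) + (index (rep t) (enum lower)).*2.

Lemma lowerC t : (s t \in lower) = (t \notin lower).
Proof.
have : enum_rank (s t) != enum_rank t by rewrite (inj_eq enum_rank_inj) s_fix.
by rewrite !inE sK -leqNgt ltn_neqAle => ->.
Qed.

Lemma card_lower : #|T| = #|lower|.*2.
Proof.
have lowerCE : ~: lower = s @: lower.
  apply/setP => t; rewrite inE; apply/idP/imsetP => [tR|[u uR ->]].
    by exists (s t); rewrite ?sK // lowerC.
  by rewrite -lowerC sK.
have := cardsC lower; rewrite lowerCE card_imset; last exact: inv_inj.
by rewrite addnn => <-.
Qed.

Lemma rep_mem t : rep t \in enum lower.
Proof. by rewrite mem_enum /rep; case: ifP => // /negbT; rewrite -lowerC. Qed.

Lemma rep_eq x y : (rep x == rep y) = (y == x) || (y == s x).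
Proof.
apply/eqP/orP => [|[/eqP->|/eqP->]] //; last by rewrite /rep lowerC sK; case: ifP.
rewrite /rep; case: (x \in lower); case: (y \in lower) => E.
- by left; rewrite E.
- by right; rewrite E sK.
- by right; rewrite E.
- by left; rewrite (inv_inj sK E).
Qed.

Lemma label_lt t : label t < #|T|.
Proof.
have : index (rep t) (enum lower) < #|lower| by rewrite cardE index_mem rep_mem.
by rewrite card_lower /label; case: (_ \notin _); lia.
Qed.

Lemma label_half_eq x y : ((label x)./2 == (label y)./2) = (rep x == rep y).
Proof.
rewrite !half_bit_double; apply/eqP/eqP => [|-> //].
exact: index_inj (rep_mem x) (rep_mem y).
Qed.

Lemma label_eq x y : (label x == label y) = (x == y).
Proof.
apply/eqP/eqP => [lxy|-> //].
have odd_l t : odd (label t) = (t \notin lower).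
  by rewrite /label oddD odd_double addbF oddb.
have : rep x == rep y by rewrite -label_half_eq lxy.
rewrite rep_eq => /orP [/eqP // | /eqP ys].
by move: (odd_l x) (odd_l y); rewrite lxy ys lowerC => ->; case: (x \in lower).
Qed.

Lemma involution_cocktail : ~~ odd #|T| /\ isomorphic e #|T| (cocktail_rel #|T|).
Proof.
split; first by rewrite card_lower odd_double.
pose f t : 'I_#|T| := Ordinal (label_lt t).
exists f; split.
  apply: inj_card_bij; rewrite ?card_ord // => x y /(congr1 val) /eqP.
  by rewrite label_eq => /eqP.
move=> x y; rewrite eE /cocktail_rel -(inj_eq val_inj) /= label_eq label_half_eq.
by rewrite rep_eq negb_or eq_sym; case: eqVneq.
Qed.

End InvolutionCocktail.

Section GammaTwo.
Variables (T : finType) (e : rel T).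
Hypotheses (e_sym : symmetric e) (e_irr : irreflexive e) (hyp : hypo_unique e).
Hypothesis g2 : gamma e setT = 2.
Implicit Types (t u v x y z : T).

(* In K_n minus a perfect matching, the mate of x is its partner. *)
Definition mate x z :=
  [&& z != x, ~~ e x z & [forall t, (t != x) && (t != z) ==> e t z]].

Lemma mateP x z : reflect [/\ z != x, ~~ e x z & forall t, t != x -> t != z -> e t z]
  (mate x z).
Proof.
apply: (iffP and3P) => [[h1 h2 /forallP h3]|[h1 h2 h3]]; split => //.
  by move=> t t1 t2; move: (h3 t); rewrite t1 t2.
by apply/forallP => t; apply/implyP => /andP [t1 t2]; apply: h3.
Qed.

Lemma mate_dominating x z : mate x z -> dominating e (setT :\ x) [set z].
Proof.
case/mateP => zx _ H; apply/dominatingP; split; first by rewrite sub1set !inE zx.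
move=> t; rewrite !inE => /andP [tx _]; have [->|tz] := eqVneq t z; first by left.
by right; exists z; rewrite ?inE ?H.
Qed.

Lemma mate_gamma_set x z u :
  mate x z -> (u == x) || e x u -> gamma_set e setT [set z; u].
Proof.
case/mateP => zx nxz H hu; apply: dominating_gamma_set; last first.
  by rewrite cards2 g2; case: (z != u).
apply/dominatingP; split=> [|t _]; first exact: subsetT.
have [->|tz] := eqVneq t z; first by left; rewrite !inE eqxx.
have [->|tu] := eqVneq t u; first by left; rewrite !inE eqxx orbT.
have [etx|tx] := eqVneq t x; last by right; exists z; rewrite ?inE ?eqxx ?H.
case/orP: hu => [/eqP ux|exu]; first by move: tu; rewrite etx ux eqxx.
by right; exists u; rewrite ?inE ?eqxx ?orbT ?etx.
Qed.

Lemma exists_mate_of_lt x : gamma e (setT :\ x) < 2 -> exists z, mate x z.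
Proof.
move=> lt; have [D gD _] := gamma_setD1_unique hyp x.
have lt' : gamma e (setT :\ x) < gamma e setT by rewrite g2.
have [eqg xD nbr] := gamma_setD1_ltE lt' gD.
have /cards1P [z Dz] : #|D| == 1.
  by rewrite (gamma_set_card gD); move: eqg; rewrite g2 => -[->].
have zD : z \in D by rewrite Dz inE.
have /dominatingP [sub H] := gamma_set_dominating gD.
exists z; apply/mateP; split; last 1 first.
- move=> t tx tz; have /H : t \in setT :\ x by rewrite !inE tx.
  by rewrite Dz; case=> [|[y /set1P ->]] //; rewrite inE (negbTE tz).
- by move: (subsetP sub z zD); rewrite !inE andbT.
- exact: nbr.
Qed.

Lemma mate_of_gamma_sets y D1 D2 : gamma_set e setT D1 -> gamma_set e setT D2 ->
  D1 != D2 -> y \notin D1 -> y \notin D2 -> exists z, mate y z.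
Proof.
move=> h1 h2 n12 y1 y2; have := gamma_setD1_lt hyp h1 h2 n12 y1 y2; rewrite g2.
exact: exists_mate_of_lt.
Qed.

Section CriticalMate.
Variables (v z : T).
Hypothesis mvz : mate v z.

Lemma mate_via_nbr y u : y != v -> y != z -> e v u -> u != y -> exists zy, mate y zy.
Proof.
move=> yv yz evu uy; have uv : u != v by apply: contraTneq evu => ->; rewrite e_irr.
have zv : z != v by case/mateP: mvz.
apply: (@mate_of_gamma_sets y [set z; v] [set z; u]).
- by apply: (mate_gamma_set mvz); rewrite eqxx.
- by apply: (mate_gamma_set mvz); rewrite evu orbT.
- apply/negP => /eqP E; have : v \in [set z; u] by rewrite -E !inE eqxx orbT.
  by rewrite !inE eq_sym (negbTE zv) eq_sym (negbTE uv).
- by rewrite !inE negb_or yz yv.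
- by rewrite !inE negb_or yz eq_sym uy.
Qed.

Lemma mate_of_partner : (forall y, y != v -> y != z -> exists zy, mate y zy) ->
  exists zz, mate z zz.
Proof.
move=> Hm; case/mateP: (mvz) => zv nvz Hz.
have [y1 evy1] := exists_nbr e_sym hyp v.
have y1v : y1 != v by apply: contraTneq evy1 => ->; rewrite e_irr.
have y1z : y1 != z by apply: contraNneq nvz => <-.
have [zy mzy] := Hm y1 y1v y1z; case/mateP: (mzy) => zy1 ny1 _.
have zzy : z != zy by apply: contraNneq ny1 => <-; apply: Hz.
apply: (@mate_of_gamma_sets z [set zy; y1] [set zy; v]).
- by apply: (mate_gamma_set mzy); rewrite eqxx.
- by apply: (mate_gamma_set mzy); rewrite e_sym evy1 orbT.
- apply/negP => /eqP E; have : y1 \in [set zy; v] by rewrite -E !inE eqxx orbT.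
  by rewrite !inE eq_sym (negbTE zy1) (negbTE y1v).
- by rewrite !inE negb_or zzy eq_sym y1z.
- by rewrite !inE negb_or zzy zv.
Qed.

Section SingleNeighbour.
Variable y0 : T.
Hypotheses (y0v : y0 != v) (y0z : y0 != z) (Nv : forall u, e v u -> u = y0).

Lemma single_nbr_mate u : u != v -> u != y0 -> u != z -> mate u y0.
Proof.
move=> uv uy0 uz; case/mateP: (mvz) => zv nvz _.
have [u0 evu0] := exists_nbr e_sym hyp v.
have evy0 : e v y0 by rewrite -(Nv evu0).
have y0u : y0 != u by rewrite eq_sym.
have [zu mzu] := mate_via_nbr uv uz evy0 y0u.
suff <- : zu = y0 by [].
case/mateP: (mzu) => zuu nuzu Hu.
have zuv : zu != v.
  apply: contraNneq nvz => zuv; rewrite e_sym -zuv.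
  by apply: Hu; [rewrite eq_sym | rewrite zuv].
by apply: Nv; apply: Hu; rewrite eq_sym.
Qed.

Lemma single_nbr_false : False.
Proof.
case/mateP: (mvz) => zv nvz Hz.
have [u0 evu0] := exists_nbr e_sym hyp v.
have evy0 : e v y0 by rewrite -(Nv evu0).
have [/existsP [u /and3P [uv uy0 uz]]|/existsPn none] :=
  boolP [exists u, [&& u != v, u != y0 & u != z]]; last first.
  suff : gamma e setT <= 1 by rewrite g2.
  rewrite -(cards1 y0) gamma_leq_card //; apply/dominatingP; split=> [|t _].
    exact: subsetT.
  have [->|ty0] := eqVneq t y0; first by left; rewrite inE.
  right; exists y0; first by rewrite inE.
  have [->//|tv] := eqVneq t v; have [->|tz] := eqVneq t z; first by rewrite e_sym Hz.
  by move: (none t); rewrite tv ty0 tz.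
have onlyu t : t != v -> t != y0 -> t != z -> t = u.
  move=> tv ty0 tz; apply/eqP/negPn/negP => tu.
  case/mateP: (single_nbr_mate uv uy0 uz) => _ _ Hu.
  case/mateP: (single_nbr_mate tv ty0 tz) => _ nt _.
  by move: nt; rewrite Hu // eq_sym.
have [zy] : exists zy, mate y0 zy.
  apply: (@mate_of_gamma_sets y0 [set z; v] [set v; u]).
  - by apply: (mate_gamma_set mvz); rewrite eqxx.
  - apply: dominating_gamma_set; last by rewrite cards2 g2; case: (v != u).
    apply/dominatingP; split=> [|t _]; first exact: subsetT.
    have [->|tv] := eqVneq t v; first by left; rewrite !inE eqxx.
    have [->|tu] := eqVneq t u; first by left; rewrite !inE eqxx orbT.
    right; have [->|ty0] := eqVneq t y0; first by exists v; rewrite ?inE ?eqxx // e_sym.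
    have [->|tz] := eqVneq t z; first by exists u; rewrite ?inE ?eqxx ?orbT // e_sym Hz.
    by move: tu; rewrite (onlyu t tv ty0 tz) eqxx.
  - apply/negP => /eqP E; have : z \in [set v; u] by rewrite -E !inE eqxx.
    by rewrite !inE (negbTE zv) eq_sym (negbTE uz).
  - by rewrite !inE negb_or y0z y0v.
  - by rewrite !inE negb_or y0v eq_sym uy0.
case/mateP => zyy0 ny0 Hy0.
have [zyv|zyv] := eqVneq zy v; first by move: ny0; rewrite zyv e_sym evy0.
have [zyz|zyz] := eqVneq zy z; first by move: ny0; rewrite zyz Hz.
have : e v zy by apply: Hy0; rewrite eq_sym.
by move/Nv/eqP; rewrite (negbTE zyy0).
Qed.

End SingleNeighbour.
End CriticalMate.

Lemma card_gt2 : 2 < #|T|.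
Proof.
rewrite ltnNge; apply/negP => le2.
have n2 : #|T| = 2 by have := card_gt1 e_sym e_irr hyp; lia.
by move: (card2_K2 e_sym e_irr hyp n2).1; rewrite g2.
Qed.

Lemma exists_mate y : exists z, mate y z.
Proof.
have [v ltv] := exists_critical_vertex e_sym e_irr hyp card_gt2; rewrite g2 in ltv.
have [z mvz] := exists_mate_of_lt ltv.
have [/forallP Ha|/forallPn [y0]] :=
  boolP [forall y1, (y1 != v) && (y1 != z) ==> [exists u, e v u && (u != y1)]].
  have mates y1 : y1 != v -> y1 != z -> exists zy, mate y1 zy.
    move=> y1v y1z; move: (Ha y1); rewrite y1v y1z => /existsP [u /andP [evu uy1]].
    exact: (mate_via_nbr mvz y1v y1z evu uy1).
  have [->|yv] := eqVneq y v; first by exists z.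
  have [->|yz] := eqVneq y z; last exact: mates.
  exact: (mate_of_partner mvz mates).
rewrite negb_imply => /andP [/andP [y0v y0z] /existsPn Nv]; exfalso.
apply: (single_nbr_false mvz y0v y0z) => u evu.
by apply/eqP/negPn/negP => uy0; move: (Nv u); rewrite evu uy0.
Qed.

Lemma gamma2_cocktail :
  [/\ 4 <= #|T|, ~~ odd #|T| & isomorphic e #|T| (cocktail_rel #|T|)].
Proof.
pose phi x := odflt x [pick z | mate x z].
have mphi x : mate x (phi x).
  rewrite /phi; case: pickP => [//|none]; have [z mz] := exists_mate x.
  by move: (none z); rewrite mz.
have phi_inj : injective phi.
  move=> x x' eq; apply/eqP/negPn/negP => xx'.
  case/mateP: (mphi x) => _ _ Hx; case/mateP: (mphi x') => _ nx' _.
  have x'x : x' != x by rewrite eq_sym.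
  have x'phi : x' != phi x by rewrite eq eq_sym; case/mateP: (mphi x').
  by move: nx'; rewrite -eq Hx.
have [sg phiK sgK] := injF_bij phi_inj.
have msg t : mate (sg t) t by rewrite -{2}(sgK t).
have eE a b : e a b = (a != b) && (b != sg a).
  rewrite e_sym; case/mateP: (msg a) => _ nsa Ha.
  have [->|ba] := eqVneq b a; first by rewrite e_irr.
  by have [->|bsa] := eqVneq b (sg a); [exact: negbTE | rewrite Ha].
have s_fix t : sg t != t by case/mateP: (msg t); rewrite eq_sym.
have sK : involutive sg.
  move=> a; apply/eqP/negPn/negP => ssa.
  have : e (sg a) a by rewrite eE s_fix eq_sym ssa.
  by case/mateP: (msg a) => _ /negbTE ->.
have [ev iso] := involution_cocktail sK s_fix eE.
by split=> //; move: card_gt2 ev; case: #|T| => [|[|[|[|]]]].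
Qed.

End GammaTwo.

Definition V7 := iota 0 7.
Definition pairs := [seq [:: a; b] | a <- V7, b <- iota a (7 - a)].
Definition triples := [seq a :: p | a <- V7, p <- pairs].

Definition ord7_rel (r : nat -> nat -> bool) : rel 'I_7 := fun i j => r i j.
Definition nset (l : seq nat) : {set 'I_7} := [set i : 'I_7 | val i \in l].

Definition ndominating (r : nat -> nat -> bool) (S l : seq nat) :=
  all (fun d => d \in S) l && all (fun x => (x \in l) || has (r x) l) S.

Definition two_distinct (ls : seq (seq nat)) :=
  if ls is l :: ls' then
    has (fun l' => ~~ (all (fun k => k \in l') l && all (fun k => k \in l) l')) ls'
  else false.

Definition cyclen (x y : nat) := (y == x.+1 %% 7) || (x == y.+1 %% 7).

Lemma cycle7E : cycle_rel 7 = ord7_rel cyclen.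
Proof. by []. Qed.

Lemma mem_V7 k : (k \in V7) = (k < 7).
Proof. by rewrite mem_iota. Qed.

Lemma V7_lt7 : all (fun x => x < 7) V7.
Proof. by []. Qed.

Lemma rem_lt7 w : all (fun x => x < 7) (rem w V7).
Proof. by apply/allP => x /mem_rem; rewrite mem_V7. Qed.

Lemma card_nset l : #|nset l| <= size l.
Proof.
rewrite cardE -(size_map val); apply: uniq_leq_size.
  by rewrite (map_inj_uniq val_inj) enum_uniq.
by move=> k /mapP [i]; rewrite mem_enum inE => il ->.
Qed.

Lemma nset_V7 : nset V7 = setT.
Proof. by apply/setP => i; rewrite in_set in_setT mem_iota ltn_ord. Qed.

Lemma nset_rem w : w < 7 -> nset (rem w V7) = setT :\ inord w.
Proof.
move=> w7; apply/setP => i; rewrite in_set (mem_rem_uniq _ (iota_uniq 0 7 : uniq V7)).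
by rewrite inE mem_V7 in_setD1 in_setT -(inj_eq val_inj) /= inordK // ltn_ord.
Qed.

Lemma nset_pair (i j : 'I_7) : nset [:: val i; val j] = [set i; j].
Proof. by apply/setP => k; rewrite !inE. Qed.

Lemma ndominating_lt7 r S l :
  all (fun x => x < 7) S -> ndominating r S l -> all (fun x => x < 7) l.
Proof. by move=> /allP S7 /andP [/allP lS _]; apply/allP => x /lS /S7. Qed.

Lemma ndominatingE r S l : all (fun x => x < 7) S -> all (fun x => x < 7) l ->
  dominating (ord7_rel r) (nset S) (nset l) = ndominating r S l.
Proof.
move=> /allP S7 /allP l7; rewrite /dominating /ndominating; congr andb.
  apply/subsetP/allP => [H d dl|H i]; last by rewrite !in_set => /H.
  by have := H (inord d); rewrite !in_set /= inordK ?l7 //; apply.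
apply/forall_inP/allP => [H x xS|H i].
  have := H (inord x); rewrite !in_set /= inordK ?S7 // => /(_ xS) /orP [->//|].
  case/exists_inP => j; rewrite in_set => jl exj; apply/orP; right.
  by apply/hasP; exists (val j); rewrite /ord7_rel /= inordK ?S7 in exj.
rewrite !in_set => /H /orP [->//|/hasP [j jl exj]]; apply/orP; right.
by apply/exists_inP; exists (inord j); rewrite /ord7_rel ?in_set /= inordK ?l7.
Qed.

Lemma two_distinct_nset ls : {in ls, forall l, all (fun x => x < 7) l} ->
  two_distinct ls -> exists l l', [/\ l \in ls, l' \in ls & nset l != nset l'].
Proof.
case: ls => [//|l ls] ls7 /hasP [l' l'ls]; rewrite negb_and => neq.
exists l, l'; split; rewrite ?mem_head ?inE ?l'ls ?orbT //.
have nsub (a b : seq nat) :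
    all (fun x => x < 7) a -> ~~ all (fun k => k \in b) a -> nset a != nset b.
  move=> /allP a7 /allPn [k ka kb]; apply/negP => /eqP /setP /(_ (inord k)).
  by rewrite !in_set /= inordK ?a7 // ka (negbTE kb).
case/orP: neq; first by apply: nsub; rewrite ls7 ?mem_head.
by rewrite eq_sym; apply: nsub; rewrite ls7 // inE l'ls orbT.
Qed.

Lemma small_nset (D : {set 'I_7}) : #|D| <= 2 -> D != set0 ->
  exists2 l, l \in pairs & D = nset l.
Proof.
move=> c2 n0; have pairs_mem (i j : 'I_7) : i <= j -> [:: val i; val j] \in pairs.
  move=> ij; apply/allpairsPdep; exists (val i), (val j).
  by rewrite /V7 !mem_iota /= ij; split=> //; have := ltn_ord j; lia.
have [/eqP D1 | D2] := eqVneq #|D| 1.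
  case/cards1P: D1 => i ->; exists [:: val i; val i]; first exact: pairs_mem.
  by rewrite nset_pair setUid.
have /cards2P [i [j [_ ->]]] : #|D| == 2.
  by move: c2 n0 D2; rewrite -cards_eq0; case: #|D| => [|[|[|]]].
have [ij|ji] := leqP i j; first by exists [:: val i; val j]; rewrite ?pairs_mem ?nset_pair.
by exists [:: val j; val i]; rewrite ?pairs_mem ?nset_pair 1?setUC // ltnW.
Qed.

Definition cycle7_perm (r : nat -> nat -> bool) (p : seq nat) :=
  all (fun i => all (fun j => r i j == cyclen (nth 0 p i) (nth 0 p j)) V7) V7.

(* The first four tests exhibit a violation of hypo-uniqueness or of
   [gamma = 3] (lemmas [no_*7] below).  Nested [if]s rather than [||]:
   [vm_compute] evaluates both arguments of [orb]. *)
Definition c7_decide (r : nat -> nat -> bool) : bool :=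
  if has (fun w => all (fun y => ~~ r w y) V7) V7 then true else
  if has (ndominating r V7) pairs then true else
  if has (fun w => two_distinct [seq l <- pairs | ndominating r (rem w V7) l]) V7
  then true else
  if has (fun w => ~~ has (ndominating r (rem w V7)) pairs &&
        two_distinct [seq l <- triples | (w \notin l) && ndominating r V7 l]) V7
  then true else has (cycle7_perm r) (permutations V7).

Lemma cycle7_perm_iso r p : p \in permutations V7 -> cycle7_perm r p ->
  isomorphic (ord7_rel r) 7 (cycle_rel 7).
Proof.
rewrite mem_permutations => pV /allP rp.
have p7 (i : 'I_7) : nth 0 p i < 7.
  have : nth 0 p i \in V7 by rewrite -(perm_mem pV) mem_nth // (perm_size pV) ltn_ord.
  by rewrite mem_iota.
exists (fun i : 'I_7 => inord (nth 0 p i) : 'I_7); split.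
  apply: inj_card_bij => // i j /(congr1 val); rewrite /= !inordK // => /eqP.
  rewrite nth_uniq ?(perm_size pV) ?(perm_uniq pV) ?iota_uniq // => /eqP; exact: val_inj.
have iV (k : 'I_7) : val k \in V7 by rewrite mem_iota ltn_ord.
move=> i j; rewrite cycle7E /ord7_rel /= !inordK //.
exact/eqP/(allP (rp _ (iV i)) _ (iV j)).
Qed.

Lemma size_pairs l : l \in pairs -> size l = 2.
Proof. by case/allpairsPdep => a [b [_ _ ->]]. Qed.

Lemma pairs_lt7 l : l \in pairs -> all (fun x => x < 7) l.
Proof.
case/allpairsPdep => a [b [aV bI ->]]; move: aV bI.
by rewrite mem_V7 mem_iota /= andbT; lia.
Qed.

Lemma size_triples l : l \in triples -> size l = 3.
Proof. by case/allpairsPdep => a [p [_ /size_pairs sp ->]]; rewrite /= sp. Qed.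

Section SevenVertexRefutations.
Variable r : nat -> nat -> bool.
Hypotheses (r_sym : symmetric (ord7_rel r)) (hyp : hypo_unique (ord7_rel r)).
Hypothesis g3 : gamma (ord7_rel r) setT = 3.

Lemma dominating_nset S l : all (fun x => x < 7) S -> ndominating r S l ->
  dominating (ord7_rel r) (nset S) (nset l).
Proof. by move=> S7 d; rewrite ndominatingE // (ndominating_lt7 S7 d). Qed.

Lemma no_isolated7 : ~~ has (fun w => all (fun y => ~~ r w y) V7) V7.
Proof.
apply/hasPn => w; rewrite mem_V7 => w7; apply/allPn.
have [y] := exists_nbr r_sym hyp (inord w : 'I_7).
by rewrite /ord7_rel inordK // => rwy; exists (val y); rewrite ?mem_V7 ?ltn_ord ?rwy.
Qed.

Lemma no_dominating_pair7 : ~~ has (ndominating r V7) pairs.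
Proof.
apply/hasPn => l /size_pairs sl; apply/negP => /(dominating_nset V7_lt7).
rewrite nset_V7 => /gamma_leq_card; rewrite g3 => c3.
by have := leq_trans c3 (card_nset l); rewrite sl.
Qed.

Lemma no_two_dominating_pairs7 :
  ~~ has (fun w => two_distinct [seq l <- pairs | ndominating r (rem w V7) l]) V7.
Proof.
apply/hasPn => w; rewrite mem_V7 => w7; apply/negP.
case/two_distinct_nset => [l|l [l' []]].
  by rewrite mem_filter => /andP [/(ndominating_lt7 (rem_lt7 w))].
rewrite !mem_filter => /andP [dl /size_pairs sl] /andP [dl' /size_pairs sl'] /eqP; apply.
apply: (small_dominating_setD1_uniq hyp (w := inord w)); rewrite -?nset_rem ?g3 //.
- exact: dominating_nset (rem_lt7 w) dl.
- exact: dominating_nset (rem_lt7 w) dl'.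
- by have := card_nset l; rewrite sl.
- by have := card_nset l'; rewrite sl'.
Qed.

Lemma no_two_dominating_triples7 :
  ~~ has (fun w => ~~ has (ndominating r (rem w V7)) pairs &&
        two_distinct [seq l <- triples | (w \notin l) && ndominating r V7 l]) V7.
Proof.
apply/hasPn => w; rewrite mem_V7 => w7; apply/negP => /andP [/hasPn nopair].
case/two_distinct_nset => [l|l [l' []]].
  by rewrite mem_filter => /andP [/andP [_ /(ndominating_lt7 V7_lt7)]].
rewrite !mem_filter => /andP [/andP [wl dl] /size_triples sl].
move=> /andP [/andP [wl' dl'] /size_triples sl'] n12.
have [D dD] : exists2 D, dominating (ord7_rel r) (setT :\ inord w) D &
    #|D| < gamma (ord7_rel r) setT.
  apply: (small_dominating_setD1 hyp _ _ n12); rewrite ?g3 -?nset_V7.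
  - exact: dominating_nset V7_lt7 dl.
  - exact: dominating_nset V7_lt7 dl'.
  - by have := card_nset l; rewrite sl.
  - by have := card_nset l'; rewrite sl'.
  - by rewrite in_set /= inordK.
  - by rewrite in_set /= inordK.
rewrite g3 ltnS => cD; have [D0|D0] := eqVneq D set0.
  move: dD; rewrite D0 => /dominating_set0/setP/(_ (inord (w.+1 %% 7))).
  have : w.+1 %% 7 != w by clear -w7; case: w w7 => [|[|[|[|[|[|[|]]]]]]].
  by rewrite !inE -(inj_eq val_inj) /= !inordK ?ltn_pmod // => ->.
have [p pp Dp] := small_nset cD D0; move: dD.
by rewrite Dp -nset_rem // ndominatingE ?rem_lt7 ?(pairs_lt7 pp) // (negbTE (nopair p pp)).
Qed.

Lemma c7_decide_iso : c7_decide r -> isomorphic (ord7_rel r) 7 (cycle_rel 7).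
Proof.
rewrite /c7_decide (negbTE no_isolated7) (negbTE no_dominating_pair7).
rewrite (negbTE no_two_dominating_pairs7) (negbTE no_two_dominating_triples7).
by case/hasP => p; apply: cycle7_perm_iso.
Qed.

End SevenVertexRefutations.

Lemma gamma_cycle7 : gamma (cycle_rel 7) setT = 3.
Proof.
rewrite cycle7E; apply/eqP; rewrite eqn_leq; apply/andP; split.
  apply: leq_trans (card_nset [:: 0; 3; 5]).
  by rewrite gamma_leq_card // -nset_V7 ndominatingE.
rewrite ltnNge; apply/negP => le2.
have [D dD cD] := gamma_exists (ord7_rel cyclen) setT.
have D0 : D != set0.
  apply: contraTneq dD => ->; apply/negP.
  by move=> /dominating_set0 /setP /(_ ord0); rewrite !inE.
rewrite -cD in le2; have [p pp Dp] := small_nset le2 D0.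
have nopair : ~~ has (ndominating cyclen V7) pairs by vm_compute.
move: dD; rewrite Dp -nset_V7 ndominatingE ?(pairs_lt7 pp) //.
by rewrite (negbTE (hasPn nopair p pp)).
Qed.

(* Vertex 0 is a critical vertex v, {1, 2} is the gamma-set of G - v, and
   {3, 4}, {5, 6} are the private neighbours of 1 and 2; the 11 bits are the
   remaining adjacencies, those not forced by [template_frame]. *)
Definition template (bs : seq bool) (i j : nat) : bool :=
  match minn i j, maxn i j with
  | 1, 3 | 1, 4 | 2, 5 | 2, 6 => true
  | 0, 3 => nth false bs 0
  | 0, 4 => nth false bs 1
  | 0, 5 => nth false bs 2
  | 0, 6 => nth false bs 3
  | 1, 2 => nth false bs 4
  | 3, 4 => nth false bs 5
  | 3, 5 => nth false bs 6
  | 3, 6 => nth false bs 7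
  | 4, 5 => nth false bs 8
  | 4, 6 => nth false bs 9
  | 5, 6 => nth false bs 10
  | _, _ => false
  end.

Definition template_frame (r : nat -> nat -> bool) :=
  [&& r 1 3, r 1 4, r 2 5, r 2 6, ~~ r 1 5, ~~ r 1 6, ~~ r 2 3, ~~ r 2 4,
      ~~ r 0 1 & ~~ r 0 2].

Definition bits (r : rel 'I_7) : seq bool :=
  [seq r (inord ij.1) (inord ij.2) | ij <- [:: (0, 3); (0, 4); (0, 5); (0, 6); (1, 2);
     (3, 4); (3, 5); (3, 6); (4, 5); (4, 6); (5, 6)]].

Fixpoint allbits (n : nat) : seq (seq bool) :=
  if n is n'.+1 then map (cons false) (allbits n') ++ map (cons true) (allbits n')
  else [:: [::]].

Lemma allbits_mem bs : bs \in allbits (size bs).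
Proof.
have cons_inj (c : bool) : injective (cons c) by move=> s1 s2 [].
elim: bs => [|b bs IH] //=; rewrite mem_cat.
by case: b; rewrite (mem_map (cons_inj _)) IH ?orbT.
Qed.

Lemma template_sym bs : symmetric (ord7_rel (template bs)).
Proof. by move=> i j; rewrite /ord7_rel /template minnC maxnC. Qed.


Lemma template_bits (r : rel 'I_7) : symmetric r -> irreflexive r ->
  template_frame (fun a b => r (inord a) (inord b)) ->
  forall i j, r i j = ord7_rel (template (bits r)) i j.
Proof.
move=> r_sym r_irr /and5P [k13 k14 k25 k26 /and5P [/negbTE k15 /negbTE k16
  /negbTE k23 /negbTE k24 /andP [/negbTE k01 /negbTE k02]]].
suff H a b : a < 7 -> b < 7 -> r (inord a) (inord b) = template (bits r) a b.
  by move=> i j; rewrite /ord7_rel -H ?ltn_ord // !inord_val.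
case: a => [|[|[|[|[|[|[|a]]]]]]] // _; case: b => [|[|[|[|[|[|[|b]]]]]]] // _;
  rewrite /template /=; first [ by rewrite r_irr | by [] | by rewrite r_sym
  | by rewrite ?k13 ?k14 ?k25 ?k26 ?k15 ?k16 ?k23 ?k24 ?k01 ?k02
  | by rewrite r_sym ?k13 ?k14 ?k25 ?k26 ?k15 ?k16 ?k23 ?k24 ?k01 ?k02 ].
Qed.

Lemma c7_table : all (fun bs => c7_decide (template bs)) (allbits 11).
Proof. by vm_compute. Qed.

Section OrderSeven.
Variables (T : finType) (e : rel T).
Hypotheses (e_sym : symmetric e) (e_irr : irreflexive e) (hyp : hypo_unique e).
Hypotheses (n7 : #|T| = 7) (g3 : gamma e setT = 3).

Lemma order7_frame : exists g : 'I_7 -> T,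
  injective g /\ template_frame (fun a b => e (g (inord a)) (g (inord b))).
Proof.
have [v lt] := exists_critical_vertex e_sym e_irr hyp (ltac:(by rewrite n7)).
have [D gD uD] := gamma_setD1_unique hyp v.
have [eqg vD nbr] := gamma_setD1_ltE lt gD.
have /cards2P [x [y [xy Dxy]]] : #|D| == 2.
  by rewrite (gamma_set_card gD); move: eqg; rewrite g3 => -[->].
have xD : x \in D by rewrite Dxy !inE eqxx.
have yD : y \in D by rewrite Dxy !inE eqxx orbT.
pose P z := [set p | private_nbr e (setT :\ v) D z p].
have P2 z : z \in D -> 1 < #|P z|.
  move=> zD; have [u ezu] := exists_nbr e_sym hyp z.
  apply: (private_nbr_card_gt1 e_sym e_irr gD uD zD _ ezu); rewrite !inE andbT.
  by apply: contraTneq ezu => ->; rewrite e_sym nbr.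
have /card_gt1P [a1 [a2 [ha1 ha2 a12]]] := P2 x xD.
have /card_gt1P [b1 [b2 [hb1 hb2 b12]]] := P2 y yD.
rewrite !inE in ha1 ha2 hb1 hb2.
have Pout z p : private_nbr e (setT :\ v) D z p -> [&& v != p, x != p & y != p].
  case/and4P; rewrite !inE Dxy !inE negb_or => /andP [pv _] /andP [px py] _ _.
  by rewrite !(eq_sym _ p) pv px py.
have Pxy p q : private_nbr e (setT :\ v) D x p -> private_nbr e (setT :\ v) D y q -> p != q.
  move=> hp hq; apply: contra_neq xy => pq; rewrite -pq in hq.
  exact: private_nbr_uniq hp hq yD.
pose s := [:: v; x; y; a1; a2; b1; b2].
have vx : v != x by apply: contraNneq vD => ->.
have vy : v != y by apply: contraNneq vD => ->.
have us : uniq s.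
  rewrite /s /= !inE !negb_or vx vy xy a12 b12 (Pxy _ _ ha1 hb1) (Pxy _ _ ha1 hb2).
  rewrite (Pxy _ _ ha2 hb1) (Pxy _ _ ha2 hb2).
  by case/and3P: (Pout _ _ ha1) => -> -> ->; case/and3P: (Pout _ _ ha2) => -> -> ->;
    case/and3P: (Pout _ _ hb1) => -> -> ->; case/and3P: (Pout _ _ hb2) => -> -> ->.
exists (fun i => nth v s i); split.
  by move=> i j /eqP; rewrite nth_uniq // => /eqP /val_inj.
have yx : y != x by rewrite eq_sym.
have Pe z p : private_nbr e (setT :\ v) D z p -> e z p by case/and4P.
rewrite /template_frame !inordK //= (Pe _ _ ha1) (Pe _ _ ha2) (Pe _ _ hb1) (Pe _ _ hb2).
rewrite (private_nbr_nadj hb1 xD xy) (private_nbr_nadj hb2 xD xy).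
by rewrite (private_nbr_nadj ha1 yD yx) (private_nbr_nadj ha2 yD yx) !nbr.
Qed.

Lemma order7_cycle : isomorphic e 7 (cycle_rel 7).
Proof.
have [g [g_inj frame]] := order7_frame.
have [f gK fK] : bijective g by apply: inj_card_bij; rewrite ?n7 ?card_ord.
pose e' (i j : 'I_7) := e (g i) (g j).
have e'E := template_bits (fun i j => e_sym (g i) (g j)) (fun i => e_irr (g i)) frame.
have iso : isomorphic e 7 (ord7_rel (template (bits e'))).
  by exists f; split=> [|x y]; [exists g | rewrite -e'E /e' !fK].
apply: (isomorphic_trans iso); apply: c7_decide_iso (template_sym _) _ _ _.
- exact: isomorphic_hypo_unique iso hyp.
- by rewrite -(isomorphic_gamma iso).
- by apply: (allP c7_table); rewrite -(_ : size (bits e') = 11) ?allbits_mem.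
Qed.

End OrderSeven.

Lemma gamma_cocktail_le2 m : 1 < m -> gamma (cocktail_rel m) setT <= 2.
Proof.
move=> m1; pose i0 : 'I_m := Ordinal (ltnW m1); pose i1 : 'I_m := Ordinal m1.
apply: leq_trans (gamma_leq_card (D := [set i0; i1]) _) _; last first.
  by rewrite cards2; case: (_ != _).
apply/dominatingP; split=> [|t _]; first exact: subsetT.
have [->|t0] := eqVneq t i0; first by left; rewrite !inE eqxx.
have [->|t1] := eqVneq t i1; first by left; rewrite !inE eqxx orbT.
right; exists i0; rewrite ?inE ?eqxx // /cocktail_rel t0 /=.
by move: t0 t1; rewrite -!(inj_eq val_inj) /=; case: (val t) => [|[|k]].
Qed.

Definition swap12 (i : 'I_4) : 'I_4 := inord (nth 0 [:: 0; 2; 1; 3] i).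

Lemma swap12K : involutive swap12.
Proof. by case=> [[|[|[|[|]]]] i4] //; apply/val_inj; rewrite /swap12 /= !inordK. Qed.

Lemma cocktail4_cycle4 (i j : 'I_4) :
  cocktail_rel 4 i j = cycle_rel 4 (swap12 i) (swap12 j).
Proof.
by case: i => [[|[|[|[|]]]] ?]; case: j => [[|[|[|[|]]]] ?];
  rewrite /cocktail_rel /cycle_rel /swap12 //= !inordK.
Qed.

Lemma isomorphic_cycle4_cocktail4 (T : finType) (e : rel T) :
  isomorphic e 4 (cycle_rel 4) <-> isomorphic e 4 (cocktail_rel 4).
Proof.
have bs : bijective swap12 by exists swap12; apply: swap12K.
split=> iso; apply: (isomorphic_trans iso); exists swap12; split=> // i j.
  by rewrite cocktail4_cycle4 !swap12K.
exact: cocktail4_cycle4.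
Qed.

Section Characterisation.
Variables (T : finType) (e : rel T).
Hypotheses (e_sym : symmetric e) (e_irr : irreflexive e) (hyp : hypo_unique e).

Lemma gamma_eq1 : gamma e setT = 1 <-> isomorphic e 2 (complete_rel 2).
Proof.
split=> [/(gamma_eq1_card e_sym e_irr hyp) n2 | iso].
  exact: (card2_K2 e_sym e_irr hyp n2).2.
exact: (card2_K2 e_sym e_irr hyp (isomorphic_card iso)).1.
Qed.

Lemma gamma_eq2 : gamma e setT = 2 <->
  (4 <= #|T| /\ ~~ odd #|T| /\ isomorphic e #|T| (cocktail_rel #|T|)).
Proof.
split=> [/(gamma2_cocktail e_sym e_irr hyp) [] // | [n4 [_ iso]]].
apply/eqP; rewrite eqn_leq (isomorphic_gamma iso) gamma_cocktail_le2 ?(leq_trans _ n4) //=.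
rewrite -(isomorphic_gamma iso) ltn_neqAle (gamma_gt0 hyp) andbT eq_sym.
by apply: contraTneq n4 => /(gamma_eq1_card e_sym e_irr hyp) ->.
Qed.

Lemma extremal_order : 2 < #|T| -> gamma e setT = (2 * #|T|) %/ 5 + 1 ->
  #|T| = 4 \/ #|T| = 7.
Proof.
move=> n3 eq; have := gamma_bound e_sym e_irr hyp n3; rewrite eq addn1 /=.
have := divn_eq (2 * #|T|) 5; have := ltn_pmod (2 * #|T|) (isT : 0 < 5).
move: n3 ((2 * #|T|) %/ 5) ((2 * #|T|) %% 5) => /[swap]; move: #|T| => N n3 q r; lia.
Qed.

End Characterisation.

Theorem proposition3p5 (T : finType) (e : rel T)
  (e_sym : symmetric e) (e_irr : irreflexive e) :
  hypo_unique e ->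
  let n := #|T| in
  [/\ 1 <= gamma e setT <= (2 * n) %/ 5 + 1,
      gamma e setT = 1 <-> isomorphic e 2 (complete_rel 2),
      gamma e setT = 2 <->
        (4 <= n /\ ~~ odd n /\ isomorphic e n (cocktail_rel n)) &
      gamma e setT = (2 * n) %/ 5 + 1 <->
        (isomorphic e 2 (complete_rel 2) \/ isomorphic e 4 (cycle_rel 4) \/
         isomorphic e 7 (cycle_rel 7))].
Proof.
move=> hyp n; rewrite {}/n.
have g1 := gamma_eq1 e_sym e_irr hyp; have g2 := gamma_eq2 e_sym e_irr hyp.
split=> //; first exact: gamma_range.
split=> [eq | [iso | [iso | iso]]].
- have [n3|n2] := ltnP 2 #|T|; last first.
    have n2' : #|T| = 2 by have := card_gt1 e_sym e_irr hyp; lia.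
    by left; apply/g1; rewrite eq n2'.
  have [n4|n7] := extremal_order e_sym e_irr hyp n3 eq.
    have /g2 [_ [_ iso]] : gamma e setT = 2 by rewrite eq n4.
    by right; left; apply/isomorphic_cycle4_cocktail4; rewrite -n4.
  by right; right; apply: order7_cycle; rewrite // eq n7.
- by rewrite (isomorphic_card iso) (g1.2 iso).
- have n4 := isomorphic_card iso; have /isomorphic_cycle4_cocktail4 iso' := iso.
  by rewrite n4 (_ : _ %/ 5 + 1 = 2) //; apply/g2; rewrite n4.
- by rewrite (isomorphic_gamma iso) gamma_cycle7 (isomorphic_card iso).
Qed.
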